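(* Let $N<M$ be natural numbers. Suppose $\emptyset\neq A_1\subseteq{}^N2$, $\emptyset\neq A_2\subseteq{}^{[N,M)}2$ and $A\subseteq{}^M2$ satisfy $\|A_1\|_4^N>1$, $\|A_2\|_4^{[N,M)}>1$ and $A=\{f\cup g: f\in A_1,\ g\in A_2\}$. Then \[\|A\|_4^M\geq\min\{\|A_1\|_4^N,\|A_2\|_4^{[N,M)}\}.\]
   Context: $N=\{0,\ldots,N-1\}$, $M=\{0,\ldots,M-1\}$, $[N,M)=\{N,\ldots,M-1\}$. For a finite index set $I$, ${}^I2$ is the set of all functions $I\to\{0,1\}$ and ${}^{\underline I}2$ the set of partial functions $\sigma$ with $\mathrm{dom}(\sigma)\subseteq I$ and values in $\{0,1\}$ (empty function included); for $\sigma\in{}^{\underline I}2$, $[\sigma]=\{f\in{}^I2:\sigma\subseteq f\}$. For $A\subseteq{}^I2$, $\Delta_I(A)=\{\sigma\in{}^{\underline I}2:[\sigma]\cap A=\emptyset\text{ and }[\rho]\cap A\neq\emptyset\text{ for all }\rho\subsetneq\sigma\}$. For $\delta_1,\delta_2\subseteq{}^{\underline I}2$, $\delta_1\preceq\delta_2$ means every $\sigma\in\delta_1$ has some $\rho\in\delta_2$ with $\rho\subseteq\sigma$. For $\delta\subseteq{}^{\underline I}2$, $\mathrm{hn}(\delta)$ is the maximum of $k+1$ over those natural numbers $k<|I|$ such that for every $\delta'\subseteq\delta$ there is $\delta''\subseteq\delta'$ whose elements have pairwise disjoint domains and $|\bigcup_{\sigma\in\delta''}\mathrm{dom}(\sigma)|\geq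 k|\delta'|$; $\mathrm{HN}(\delta)=\max\{\mathrm{hn}(\delta'):\delta'\subseteq{}^{\underline I}2,\ \delta\preceq\delta'\}$; and $\|A\|_4^I=\mathrm{HN}(\Delta_I(A))$ for $A\subseteq{}^I2$. *)

From mathcomp Require Import all_boot all_order.
Set Implicit Arguments. Unset Strict Implicit. Unset Printing Implicit Defensive.

(* All index sets are subsets I of an ambient finite type T (in the theorem,
   T = 'I_M).  A partial 0/1 function with domain contained in T is an
   element of {ffun T -> option bool}; its domain is where it is not None.
   A (total) function I -> {0,1} is a partial function with domain exactly I. *)

Definition pfun (T : finType) := {ffun T -> option bool}.

Section Defs.
Variable T : finType.

Definition dom (s : pfun T) : {set T} := [set x | s x != None].

Definition psub (s f : pfun T) : bool :=
  [forall x, (s x != None) ==> (f x == s x)].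

Definition totfuns (I : {set T}) : {set pfun T} := [set f | dom f == I].

Definition cyl (I : {set T}) (s : pfun T) : {set pfun T} :=
  [set f in totfuns I | psub s f].

Definition Delta (I : {set T}) (A : {set pfun T}) : {set pfun T} :=
  [set s | [&& dom s \subset I, [disjoint cyl I s & A] &
             [forall r, (psub r s && (r != s)) ==> ~~ [disjoint cyl I r & A]]]].

Definition preceq (d1 d2 : {set pfun T}) : bool :=
  [forall s in d1, exists r in d2, psub r s].

Definition pairwise_disj_dom (d : {set pfun T}) : bool :=
  [forall s in d, forall t in d, (s != t) ==> [disjoint dom s & dom t]].

Definition hn_cond (d : {set pfun T}) (k : nat) : bool :=
  [forall d1 : {set pfun T}, (d1 \subset d) ==>
     [exists d2 : {set pfun T}, [&& d2 \subset d1, pairwise_disj_dom d2 &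
        k * #|d1| <= #|\bigcup_(s in d2) dom s| ]]].

Definition hn (I : {set T}) (d : {set pfun T}) : nat :=
  \max_(k < #|I| | hn_cond d k) k.+1.

Definition HN (I : {set T}) (d : {set pfun T}) : nat :=
  \max_(d' : {set pfun T} | [forall s in d', dom s \subset I] && preceq d d')
     hn I d'.

Definition norm4 (I : {set T}) (A : {set pfun T}) : nat := HN I (Delta I A).

(* f ∪ g (for functions with disjoint domains) *)
Definition punion (f g : pfun T) : pfun T :=
  [ffun x => if f x is Some b then Some b else g x].

End Defs.

From mathcomp Require Import all_boot all_order.
Set Implicit Arguments. Unset Strict Implicit. Unset Printing Implicit Defensive.

(* A partial function s with [s] ∩ A = ∅, where A = A1 × A2 lives on the
   disjoint union I1 ∪ I2, already satisfies [s|I1] ∩ A1 = ∅ or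
   [s|I2] ∩ A2 = ∅; shrinking that restriction to a minimal one puts it
   into Δ(A1) or Δ(A2).  Hence Δ(A) ⪯ δ1 ∪ δ2 whenever Δ(A1) ⪯ δ1 and
   Δ(A2) ⪯ δ2.  If δ1, δ2 are optimal for HN(Δ(A1)), HN(Δ(A2)), their
   domains lie in the disjoint sets I1, I2, so a disjoint-domain selection
   in δ1 ∪ δ2 is the union of selections in each part, and
   hn(δ1 ∪ δ2) ≥ min(hn δ1, hn δ2). *)

Section PartialFunctions.
Variable T : finType.
Implicit Types (s t r f g : pfun T) (I : {set T}) (d e : {set pfun T}).

Lemma psubP s f : reflect (forall x, s x != None -> f x = s x) (psub s f).
Proof.
apply: (iffP forallP) => [H x sx | H x]; first exact/eqP/(implyP (H x)).
by apply/implyP => /H ->.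
Qed.

Lemma psub_refl s : psub s s.
Proof. by apply/psubP. Qed.

Lemma psub_trans s t r : psub s t -> psub t r -> psub s r.
Proof.
move=> /psubP st /psubP tr; apply/psubP => x sx.
by rewrite tr (st x sx).
Qed.

Lemma psub_dom s f : psub s f -> dom s \subset dom f.
Proof. by move=> /psubP sf; apply/subsetP => x; rewrite !inE => /[dup] /sf ->. Qed.

Lemma psub_card_dom_lt s f : psub s f -> s != f -> #|dom s| < #|dom f|.
Proof.
move=> sf; apply: contraR; rewrite -leqNgt => le_fs.
have edom : dom s = dom f by apply/eqP; rewrite eqEcard psub_dom.
apply/eqP/ffunP => x; case: (boolP (s x != None)) => [sx | /negPn/eqP sx].
  by rewrite (psubP _ _ sf x sx).
have : x \notin dom f by rewrite -edom inE sx.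
by rewrite inE negbK sx => /eqP.
Qed.

Lemma preceqP d e :
  reflect (forall s, s \in d -> exists2 r, r \in e & psub r s) (preceq d e).
Proof.
apply: (iffP forall_inP) => H s /H; first by case/exists_inP => r; exists r.
by case=> r re rs; apply/exists_inP; exists r.
Qed.

Lemma pairwise_disj_domP d :
  reflect {in d &, forall s t, s != t -> [disjoint dom s & dom t]}
          (pairwise_disj_dom d).
Proof.
apply: (iffP forall_inP) => [H s t sd td | H s sd].
  exact/implyP/(forall_inP (H s sd)).
by apply/forall_inP => t td; apply/implyP/H.
Qed.

Lemma hn_condP d (k : nat) :
  reflect (forall d1, d1 \subset d -> exists2 d2 : {set pfun T}, d2 \subset d1 &
             pairwise_disj_dom d2 && (k * #|d1| <= #|\bigcup_(s in d2) dom s|))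
          (hn_cond d k).
Proof.
apply: (iffP forallP) => H d1.
  move=> sub; have /existsP [d2 /and3P [s21 pd le]] := implyP (H d1) sub.
  by exists d2; rewrite // pd.
apply/implyP => /H [d2 sub /andP [pd le]]; apply/existsP; exists d2; exact/and3P.
Qed.

Lemma hn_cond_le d k j : j <= k -> hn_cond d k -> hn_cond d j.
Proof.
move=> jk /hn_condP H; apply/hn_condP => d1 /H [d2 sub /andP [pd le]].
by exists d2; rewrite // pd (leq_trans (leq_mul jk _) le).
Qed.

Lemma pairwise_disj_domU d e :
  (forall s t, s \in d -> t \in e -> [disjoint dom s & dom t]) ->
  pairwise_disj_dom d -> pairwise_disj_dom e -> pairwise_disj_dom (d :|: e).
Proof.
move=> cross /pairwise_disj_domP pd /pairwise_disj_domP pe.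
apply/pairwise_disj_domP => s t; rewrite !inE.
case/orP=> [sd|se] /orP [td|te]; first exact: pd.
- by move=> _; apply: cross.
- by move=> _; rewrite disjoint_sym; apply: cross.
- exact: pe.
Qed.

Lemma bigcup_dom_subset d I :
  {in d, forall s, dom s \subset I} -> \bigcup_(s in d) dom s \subset I.
Proof. by move=> H; apply/bigcupsP. Qed.

Lemma hn_condU I1 I2 d1 d2 k : [disjoint I1 & I2] ->
  {in d1, forall s, dom s \subset I1} -> {in d2, forall s, dom s \subset I2} ->
  hn_cond d1 k -> hn_cond d2 k -> hn_cond (d1 :|: d2) k.
Proof.
move=> dI dom1 dom2 /hn_condP C1 /hn_condP C2; apply/hn_condP => e sub.
have [f1 f1e /andP [pd1 le1]] := C1 (e :&: d1) (subsetIr _ _).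
have sub_d2 : e :\: d1 \subset d2.
  apply/subsetP => x /setDP [xe xd1].
  by move: (subsetP sub x xe); rewrite inE (negbTE xd1).
have [f2 f2e /andP [pd2 le2]] := C2 _ sub_d2.
have dom_f1 : {in f1, forall s, dom s \subset I1}.
  by move=> s /(subsetP f1e) /setIP [_ /dom1].
have dom_f2 : {in f2, forall s, dom s \subset I2}.
  by move=> s /(subsetP f2e) /(subsetP sub_d2) /dom2.
have dU : [disjoint \bigcup_(s in f1) dom s & \bigcup_(s in f2) dom s].
  apply: disjointWl (bigcup_dom_subset dom_f1) _.
  exact: disjointWr (bigcup_dom_subset dom_f2) dI.
exists (f1 :|: f2).
  rewrite subUset (subset_trans f1e (subsetIl _ _)).
  exact: subset_trans f2e (subsetDl _ _).
rewrite pairwise_disj_domU //=; last first.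
  by move=> s t /dom_f1 s1 /dom_f2 t2; apply: disjointWl s1 (disjointWr t2 dI).
rewrite bigcup_setU cardsU (disjoint_setI0 dU) cards0 subn0.
by rewrite -(cardsID d1 e) mulnDr leq_add.
Qed.

Lemma Delta_below I (B : {set pfun T}) s : dom s \subset I ->
  [disjoint cyl I s & B] -> exists2 t, t \in Delta I B & psub t s.
Proof.
have [n] := ubnP #|dom s|; elim: n s => // n IH s /ltnSE le_sn sI dj.
case: (boolP (s \in Delta I B)) => [sD | ]; first by exists s; rewrite ?psub_refl.
rewrite inE sI dj /= => /forallPn [r]; rewrite negb_imply negbK.
case/andP => /andP [rs nrs] djr.
have [|||t tD tr] := IH r; last by exists t; rewrite ?(psub_trans tr rs).
- exact: leq_trans (psub_card_dom_lt rs nrs) le_sn.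
- exact: subset_trans (psub_dom rs) sI.
- exact: djr.
Qed.

Definition prestr s I : pfun T := [ffun x => if x \in I then s x else None].

Lemma dom_prestr s I : dom (prestr s I) \subset I.
Proof. by apply/subsetP => x; rewrite !inE ffunE; case: (x \in I); rewrite ?eqxx. Qed.

Lemma psub_prestr s I : psub (prestr s I) s.
Proof. by apply/psubP => x; rewrite ffunE; case: (x \in I). Qed.

Lemma preceq_Delta_psub I B d s : preceq (Delta I B) d ->
  [disjoint cyl I (prestr s I) & B] -> exists2 r, r \in d & psub r s.
Proof.
move=> /preceqP prec /(Delta_below (dom_prestr s I)) [t /prec [r rd rt] ts].
by exists r; rewrite // (psub_trans rt (psub_trans ts (psub_prestr s I))).
Qed.

Lemma dom_punion f g : dom (punion f g) = dom f :|: dom g.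
Proof. by apply/setP => x; rewrite !inE ffunE; case: (f x). Qed.

Lemma punion_cyl I1 I2 s f g : [disjoint I1 & I2] -> dom s \subset I1 :|: I2 ->
  f \in cyl I1 (prestr s I1) -> g \in cyl I2 (prestr s I2) ->
  punion f g \in cyl (I1 :|: I2) s.
Proof.
move=> dI sI; rewrite !inE => /andP [/eqP df /psubP fs] /andP [/eqP dg /psubP gs].
rewrite dom_punion df dg eqxx /=; apply/psubP => x sx; rewrite ffunE.
have [xI1 | xI1] := boolP (x \in I1).
  by rewrite fs ffunE xI1 //; case: (s x) sx.
have : x \notin dom f by rewrite df.
rewrite inE negbK => /eqP ->.
have xI2 : x \in I2 by move: (subsetP sI x); rewrite !inE sx (negbTE xI1) => /(_ isT).
by rewrite gs ffunE xI2.
Qed.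

Lemma cyl_prestr_disjoint I1 I2 (A1 A2 : {set pfun T}) s :
  [disjoint I1 & I2] -> dom s \subset I1 :|: I2 ->
  [disjoint cyl (I1 :|: I2) s & [set punion f g | f in A1, g in A2]] ->
  [disjoint cyl I1 (prestr s I1) & A1] || [disjoint cyl I2 (prestr s I2) & A2].
Proof.
move=> dI sI; apply: contraLR; rewrite negb_or -!setI_eq0.
case/andP => /set0Pn [f /setIP [fc fA]] /set0Pn [g /setIP [gc gA]].
apply/set0Pn; exists (punion f g).
by rewrite inE punion_cyl //= imset2_f.
Qed.

Lemma preceq_Delta_punion I1 I2 (A1 A2 : {set pfun T}) d1 d2 :
  [disjoint I1 & I2] -> preceq (Delta I1 A1) d1 -> preceq (Delta I2 A2) d2 ->
  preceq (Delta (I1 :|: I2) [set punion f g | f in A1, g in A2]) (d1 :|: d2).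
Proof.
move=> dI p1 p2; apply/preceqP => s; rewrite inE => /and3P [sI dj _].
case/orP: (cyl_prestr_disjoint dI sI dj).
  by case/(preceq_Delta_psub p1) => r rd rs; exists r; rewrite ?inE ?rd.
by case/(preceq_Delta_psub p2) => r rd rs; exists r; rewrite ?inE ?rd ?orbT.
Qed.

Lemma hn_le_card I d : hn I d <= #|I|.
Proof. by apply/bigmax_leqP => k _; apply: ltn_ord. Qed.

Lemma HN_le_card I d : HN I d <= #|I|.
Proof. by apply/bigmax_leqP => d' _; apply: hn_le_card. Qed.

Lemma HN_gt I d (d' : {set pfun T}) k :
  {in d', forall s, dom s \subset I} -> preceq d d' ->
  hn_cond d' k -> k < #|I| -> k < HN I d.
Proof.
move=> dI prec C kI; apply: leq_trans (_ : hn I d' <= _).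
  exact: (@leq_bigmax_cond _ _ (fun j : 'I_#|I| => j.+1) (Ordinal kI)).
by apply: leq_bigmax_cond; rewrite prec andbT; apply/forall_inP.
Qed.

Lemma HN_witness I d : 0 < HN I d ->
  exists d' : {set pfun T}, [/\ {in d', forall s, dom s \subset I}, preceq d d'
               & hn_cond d' (HN I d).-1].
Proof.
rewrite /HN.
case: (pickP [pred e : {set pfun T} |
               [forall s in e, dom s \subset I] && preceq d e]) => [e0 Pe0 | P0];
  last by rewrite big_pred0.
rewrite (bigmax_eq_arg _ Pe0); case: arg_maxnP => // d' /andP [/forall_inP dI prec] _.
rewrite /hn; case: (pickP [pred k : 'I_#|I| | hn_cond d' k]) => [k0 Ck0 | P0];
  last by rewrite big_pred0.
by rewrite (bigmax_eq_arg _ Ck0); case: arg_maxnP => // k Ck _ _; exists d'.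
Qed.

End PartialFunctions.

Theorem proposition6p28 (N M : nat) (hNM : N < M)
  (A1 A2 A : {set pfun (ordinal M)}) :
  A1 != set0 ->
  A1 \subset totfuns [set i : 'I_M | i < N] ->
  A2 != set0 ->
  A2 \subset totfuns [set i : 'I_M | N <= i] ->
  A \subset totfuns [set: 'I_M] ->
  1 < norm4 [set i : 'I_M | i < N] A1 ->
  1 < norm4 [set i : 'I_M | N <= i] A2 ->
  A = [set punion f g | f in A1, g in A2] ->
  minn (norm4 [set i : 'I_M | i < N] A1) (norm4 [set i : 'I_M | N <= i] A2)
    <= norm4 [set: 'I_M] A.
Proof.
move=> _ _ _ _ _ _ _ ->.
set I1 := [set i : 'I_M | i < N]; set I2 := [set i : 'I_M | N <= i].
have dI : [disjoint I1 & I2].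
  by rewrite -setI_eq0; apply/eqP/setP => x; rewrite !inE leqNgt andNb.
have UI : I1 :|: I2 = [set: 'I_M] by apply/setP => x; rewrite !inE ltnNge orNb.
rewrite /norm4 -UI; set h1 := HN I1 _; set h2 := HN I2 _.
have [-> // | min_gt0] := posnP (minn h1 h2).
have [d1 [dom1 prec1 C1]] := HN_witness (leq_trans min_gt0 (geq_minl h1 h2)).
have [d2 [dom2 prec2 C2]] := HN_witness (leq_trans min_gt0 (geq_minr h1 h2)).
rewrite -(prednK min_gt0); apply: (HN_gt (d' := d1 :|: d2)).
- by move=> s _; rewrite UI subsetT.
- exact: preceq_Delta_punion.
- apply: (hn_condU dI dom1 dom2).
  + by apply: hn_cond_le C1; rewrite -!subn1 leq_sub2r // geq_minl.
  + by apply: hn_cond_le C2; rewrite -!subn1 leq_sub2r // geq_minr.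
- rewrite prednK //; apply: leq_trans (geq_minl h1 h2) (leq_trans (HN_le_card _ _) _).
  exact/subset_leq_card/subsetUl.
Qed.
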